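(* Let $n \ge 3$, let $x_1, \dots, x_n \in \mathbb{R}$ be pairwise distinct, and let $\theta \in \mathbb{H}$. Then $$q(\theta) = \overline{\,M_\theta^{-1}\!\left(\frac{1}{n}\sum_{j=1}^n M_\theta(x_j)\right)},$$ where $q(\theta) = \theta - n\,h(\theta)/h'(\theta)$ with $h(\theta) = \prod_{j=1}^n (x_j-\theta)$, and $M_\theta(\zeta) = \frac{\zeta-\theta}{\zeta-\overline{\theta}}$ with inverse $M_\theta^{-1}(\zeta) = \frac{\theta - \overline{\theta}\zeta}{1-\zeta}$.
   Context: $\mathbb{H} = \{\theta\in\mathbb{C}:\Im\theta>0\}$; $\overline{\cdot}$ denotes complex conjugation. For $\theta\in\mathbb{H}$, $M_\theta$ is a biholomorphic map from $\mathbb{H}$ onto the open unit disc. *)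

From HB Require Import structures.
From mathcomp Require Import all_boot all_order all_algebra.
From mathcomp Require Import complex.
From mathcomp Require Import reals.
Set Implicit Arguments. Unset Strict Implicit. Unset Printing Implicit Defensive.
Import Order.TTheory GRing.Theory Num.Theory.
Local Open Scope ring_scope.
Local Open Scope complex_scope.

Definition Mob (R : realType) (theta z : R[i]) : R[i] :=
  (z - theta) / (z - theta^*).

Definition Mobinv (R : realType) (theta z : R[i]) : R[i] :=
  (theta - theta^* * z) / (1 - z).

Definition hpoly (R : realType) (n : nat) (x : 'I_n -> R) : {poly R[i]} :=
  \prod_(j < n) ((x j)%:C%:P - 'X).

Definition qmap (R : realType) (n : nat) (x : 'I_n -> R) (theta : R[i]) : R[i] :=
  theta - n%:R * (hpoly x).[theta] / ((hpoly x)^`()).[theta].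

(* Logarithmic differentiation of h gives h'(θ)/h(θ) = -Σ_j 1/(x_j - θ), hence
   q(θ) = θ + n/σ with σ = Σ_j 1/(x_j - θ).  On the other side
   M_θ(ζ) = 1 - (θ - θ̄)/(ζ - θ̄), so the mean of the M_θ(x_j) is 1 - (θ - θ̄)σ̄/n
   (the x_j being real), and solving the Möbius map for it gives θ̄ + n/σ̄.
   Conjugating yields q(θ).  The denominators do not vanish because every
   1/(x_j - θ) lies in the upper half-plane. *)
From HB Require Import structures.
From mathcomp Require Import all_boot all_order all_algebra.
From mathcomp Require Import complex.
From mathcomp Require Import reals.
From mathcomp Require Import ring.
Set Implicit Arguments. Unset Strict Implicit. Unset Printing Implicit Defensive.
Import Order.TTheory GRing.Theory Num.Theory.
Local Open Scope ring_scope.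
Local Open Scope complex_scope.

Lemma horner_deriv_prod (F : fieldType) (I : Type) (r : seq I)
    (P : I -> {poly F}) (t : F) :
  (forall i, (P i).[t] != 0) ->
  (\prod_(i <- r) P i)^`().[t] =
    (\prod_(i <- r) P i).[t] * \sum_(i <- r) (P i)^`().[t] / (P i).[t].
Proof.
move=> P_neq0; elim: r => [|a r IH]; first by rewrite !big_nil derivC horner0 mulr0.
rewrite !big_cons derivM hornerD !hornerM IH.
by field; rewrite P_neq0.
Qed.

Section ComplexUpperHalfPlane.
Variable R : realType.
Implicit Types (theta : R[i]) (y : R).

Lemma Im_sum (I : Type) (r : seq I) (F : I -> R[i]) :
  complex.Im (\sum_(i <- r) F i) = \sum_(i <- r) complex.Im (F i).
Proof. exact: (@raddf_sum (Rcomplex R) _ (@complex.Im R) _ r xpredT F). Qed.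

Lemma conjc_invc_real_sub y theta :
  ((y%:C - theta)^-1)^* = (y%:C - theta^*)^-1.
Proof. by rewrite conjc_inv; congr _^-1; case: theta => a b; simpc. Qed.

Lemma subc_real_neq0 y theta : 0 < complex.Im theta -> y%:C - theta != 0.
Proof.
case: theta => a b /= b_gt0; apply/eqP; simpc.
by move=> -[_ /eqP]; rewrite oppr_eq0 gt_eqF.
Qed.

Lemma subc_conj_neq0 theta : 0 < complex.Im theta -> theta - theta^* != 0.
Proof.
case: theta => a b /= b_gt0; apply/eqP; simpc.
by move=> -[/eqP]; rewrite gt_eqF ?addr_gt0.
Qed.

Lemma Im_invc_real_sub_gt0 y theta :
  0 < complex.Im theta -> 0 < complex.Im ((y%:C - theta)^-1).
Proof.
case: theta => a b /= b_gt0; simpc.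
by rewrite divr_gt0 // sqrrN ltr_wpDl ?sqr_ge0 ?exprn_gt0.
Qed.

Lemma sumc_Im_gt0_neq0 (I : finType) (i0 : I) (F : I -> R[i]) :
  (forall i, 0 < complex.Im (F i)) -> \sum_i F i != 0.
Proof.
move=> Im_gt0; apply: contraNneq (lt0r_neq0 (Im_gt0 i0)) => sum0.
suff : \sum_i complex.Im (F i) == 0.
  by rewrite psumr_eq0 => [/allP/(_ i0 (mem_index_enum _))/implyP->|i _]; last exact: ltW.
by rewrite -Im_sum sum0.
Qed.

End ComplexUpperHalfPlane.

Section LogarithmicDerivative.
Variables (R : realType) (n : nat) (x : 'I_n -> R).

Lemma horner_hpoly (t : R[i]) : (hpoly x).[t] = \prod_(j < n) ((x j)%:C - t).
Proof. by rewrite horner_prod; apply: eq_bigr => j _; rewrite !hornerE. Qed.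

Lemma horner_deriv_hpoly (t : R[i]) :
  (forall j, (x j)%:C - t != 0) ->
  (hpoly x)^`().[t] = - (hpoly x).[t] * \sum_(j < n) ((x j)%:C - t)^-1.
Proof.
move=> x_neq; rewrite horner_deriv_prod => [|j]; last by rewrite !hornerE.
rewrite mulNr -mulrN -sumrN; congr (_ * _); apply: eq_bigr => j _.
by rewrite derivB derivC derivX !hornerE mulN1r.
Qed.

Lemma qmap_logderiv (t : R[i]) :
  (forall j, (x j)%:C - t != 0) -> \sum_(j < n) ((x j)%:C - t)^-1 != 0 ->
  qmap x t = t + n%:R / \sum_(j < n) ((x j)%:C - t)^-1.
Proof.
move=> x_neq sigma_neq0; rewrite /qmap horner_deriv_hpoly //.
have h_neq0 : (hpoly x).[t] != 0 by rewrite horner_hpoly; apply/prodf_neq0.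
by field; rewrite h_neq0 sigma_neq0.
Qed.

End LogarithmicDerivative.

Section Moebius.
Variable R : realType.
Implicit Types theta z : R[i].

Lemma MobE theta z : z - theta^* != 0 ->
  Mob theta z = 1 - (theta - theta^*) / (z - theta^*).
Proof. by move=> z_neq; rewrite /Mob; field. Qed.

Lemma Mobinv_mean_Mob (n : nat) (z : 'I_n -> R[i]) theta :
  theta - theta^* != 0 -> n%:R != 0 :> R[i] -> (forall j, z j - theta^* != 0) ->
  \sum_(j < n) (z j - theta^*)^-1 != 0 ->
  Mobinv theta (n%:R^-1 * \sum_(j < n) Mob theta (z j)) =
    theta^* + n%:R / \sum_(j < n) (z j - theta^*)^-1.
Proof.
move=> theta_neq n_neq0 z_neq sigma_neq0.
rewrite (eq_bigr _ (fun j _ => MobE (z_neq j))) sumrB sumr_const card_ord.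
rewrite -mulr_sumr /Mobinv; field.
by rewrite sigma_neq0 n_neq0 opprB addrC subrK mulf_neq0.
Qed.

End Moebius.

Theorem mainTheorem6 (R : realType) (n : nat) (x : 'I_n -> R) (theta : R[i]) :
  (3 <= n)%N -> injective x -> 0 < complex.Im theta ->
  qmap x theta =
    (Mobinv theta (n%:R^-1 * \sum_(j < n) Mob theta (x j)%:C))^*.
Proof.
move=> n_ge3 _ Im_theta.
have n_gt0 : (0 < n)%N by apply: leq_trans n_ge3.
have x_neq j : (x j)%:C - theta != 0 by exact: subc_real_neq0.
set sigma := \sum_(j < n) ((x j)%:C - theta)^-1.
have sigma_neq0 : sigma != 0.
  apply: (sumc_Im_gt0_neq0 (Ordinal n_gt0)) => j.
  exact: Im_invc_real_sub_gt0.
have conj_sigma : sigma^* = \sum_(j < n) ((x j)%:C - theta^*)^-1.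
  by rewrite rmorph_sum; apply: eq_bigr => j _; exact: conjc_invc_real_sub.
apply: (canRL conjCK); rewrite qmap_logderiv // Mobinv_mean_Mob.
- rewrite rmorphD fmorph_div rmorph_nat; congr (_ + _ / _); exact: conj_sigma.
- exact: subc_conj_neq0.
- by rewrite pnatr_eq0 -lt0n.
- by move=> j; rewrite -conjc_real -rmorphB conjc_eq0.
- by rewrite -conj_sigma conjc_eq0.
Qed.
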